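(* Let $J,J',J''\subseteq S$ with $J=J'\cup J''$ and $j'<j''$ for all $j'\in J'$, $j''\in J''$. Then in $A$: $$\tau^+_J=\tau^+_{J'}\tau^+_{J''}+(-1)^{\#J'}q\,\tau^-_{J'}\tau^-_{J''},\qquad \tau^-_J=\tau^-_{J'}\tau^+_{J''}+(-1)^{\#J'}\tau^+_{J'}\tau^-_{J''}.$$
   Context: $S$ is a finite set with a total order $<$, $R$ a commutative ring with $1$, $q\in R$, $A=R\langle t_s\mid s\in S\rangle$ the free associative algebra. For $J=\{j_1<\dots<j_{\#J}\}\subseteq S$, $t_J=t_{j_1}\cdots t_{j_{\#J}}$ ($t_\emptyset=1$); for $I=\{j_{\alpha_1}<\dots<j_{\alpha_{\#I}}\}\subseteq J$, $\ell_J(I)=\sum_{\nu=1}^{\#I}(\alpha_\nu-\nu)$; $\tau^-_J=\sum_{I\subseteq J,\ \#I\text{ odd}}(-1)^{\ell_J(I)}(-q)^{(\#I-1)/2}t_{J\setminus I}$ and $\tau^+_J=\sum_{I\subseteq J,\ \#I\text{ even}}(-1)^{\ell_J(I)}(-q)^{\#I/2}t_{J\setminus I}$ (so $\tau^+_\emptyset=1$, $\tau^-_\emptyset=0$). *)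

From HB Require Import structures.
From mathcomp Require Import all_boot all_order all_algebra.
From mathcomp Require Import monalg.
Set Implicit Arguments. Unset Strict Implicit. Unset Printing Implicit Defensive.
Import Order.TTheory GRing.Theory.
Local Open Scope ring_scope.

(* The free associative algebra A = R<t_s | s in S> is the monoid algebra
   of the free monoid {fmonom S} (words over S) with coefficients in R. *)
Notation freealg R S := {malg R[fmonom S]}.

Section Tau.
Context {d : Order.disp_t} {S : finOrderType d} {R : comNzRingType}.

Definition tgen (s : S) : freealg R S := << FMonom [:: s] >>.

Definition ordseq (J : {set S}) : seq S := sort <=%O (enum J).

Definition tJ (J : {set S}) : freealg R S :=
  \prod_(j <- ordseq J) tgen j.

(* ell_J(I) = sum_nu (alpha_nu - nu), where I = {j_{alpha_1} < ... },
   alpha_nu = 1 + position in J, nu = 1 + position in I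
   (the shift by 1 cancels). *)
Definition ellJ (J I : {set S}) : nat :=
  \sum_(x <- ordseq I) (index x (ordseq J) - index x (ordseq I))%N.

Definition tauM (q : R) (J : {set S}) : freealg R S :=
  \sum_(I in powerset J | odd #|I|)
     ((-1) ^+ ellJ J I * (- q) ^+ (#|I|.-1)./2) *: tJ (J :\: I).

Definition tauP (q : R) (J : {set S}) : freealg R S :=
  \sum_(I in powerset J | ~~ odd #|I|)
     ((-1) ^+ ellJ J I * (- q) ^+ (#|I| %/ 2)) *: tJ (J :\: I).
End Tau.

(* Write the subsets of [J = J' :|: J''] as [I' :|: I''] with [I' \subset J'] and
   [I'' \subset J'']. Since every element of [J'] precedes every element of [J''],
   [t_(J \ I) = t_(J' \ I') * t_(J'' \ I'')], and in [ell_J (I' :|: I'')] each of the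
   [#|I''|] elements of [I''] jumps over the [#|J'| - #|I'|] elements of [J' \ I'],
   so [ell_J (I' :|: I'') = ell_J' I' + ell_J'' I'' + #|I''| (#|J'| - #|I'|)].
   Hence each summand of [tau_J] is, up to a sign and a factor [-q] when both
   [#|I'|] and [#|I''|] are odd, the product of a summand of [tau_J'] and one of
   [tau_J''], and grouping the summands by the parities of [#|I'|] and [#|I''|]
   gives both identities. *)
From HB Require Import structures.
From mathcomp Require Import all_boot all_order all_algebra.
From mathcomp Require Import monalg.
From mathcomp Require Import ring zify.
Import Order.TTheory GRing.Theory.
Local Open Scope ring_scope.
Set Implicit Arguments. Unset Strict Implicit.

Lemma index_filter_le (T : eqType) (p : pred T) (s : seq T) (x : T) :
  p x -> (index x (filter p s) <= index x s)%N.
Proof.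
move=> px; elim: s => //= y s IHs.
case: (eqVneq y x) => [->|ne_yx]; first by rewrite px /= eqxx.
by case: (p y); rewrite /= ?(negbTE ne_yx) //; lia.
Qed.

Lemma half_pred_odd (n : nat) : odd n -> n.-1./2 = n./2.
Proof. by case: n => // n /= /negbTE evn; rewrite uphalf_half evn. Qed.

Lemma cardsU_disjoint (T : finType) (A B : {set T}) :
  [disjoint A & B] -> #|A :|: B| = (#|A| + #|B|)%N.
Proof. by move=> dAB; apply/eqP; rewrite (leq_card_setU A B).2. Qed.

Section FreeAlgebra.
Variables (R : comNzRingType) (T : monomType).

Lemma mulr_malgC (c : R) (g : {malg R[T]}) : g * c%:MP = c *: g.
Proof.
rewrite -mul_malgC !malgM_def fgmulgU fgmulUg.
by apply: eq_bigr => k _; rewrite mulm1 mul1m mulrC.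
Qed.

Lemma scalerAr_malg (c : R) (g h : {malg R[T]}) : g * (c *: h) = c *: (g * h).
Proof. by rewrite -mul_malgC mulrA mulr_malgC scalerAl. Qed.

Lemma scalerAA_malg (a b : R) (g h : {malg R[T]}) :
  (a *: g) * (b *: h) = (a * b) *: (g * h).
Proof. by rewrite scalerAr_malg -scalerAl scalerA mulrC. Qed.

End FreeAlgebra.

Section OrderedSubsets.
Variables (d : Order.disp_t) (S : finOrderType d).
Implicit Types (I J : {set S}).

Definition precedes (J1 J2 : {set S}) :=
  forall j1 j2, j1 \in J1 -> j2 \in J2 -> (j1 < j2)%O.

Lemma ordseq_sorted J : sorted <%O (ordseq J).
Proof. by rewrite sort_lt_sorted enum_uniq. Qed.

Lemma mem_ordseq J : ordseq J =i J.
Proof. by move=> x; rewrite mem_sort mem_enum. Qed.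

Lemma size_ordseq J : size (ordseq J) = #|J|.
Proof. by rewrite size_sort cardE. Qed.

Lemma ordseq_subset I J : I \subset J ->
  ordseq I = filter (mem I) (ordseq J).
Proof.
move=> sIJ; apply: lt_sorted_eq; rewrite ?ordseq_sorted //.
  exact/sorted_filter/ordseq_sorted/lt_trans.
move=> x; rewrite mem_filter !mem_ordseq /=.
by case: (boolP (x \in I)) => // /(subsetP sIJ).
Qed.

Lemma index_ordseq_subset I J x : I \subset J -> x \in I ->
  (index x (ordseq I) <= index x (ordseq J))%N.
Proof. by move=> sIJ Ix; rewrite (ordseq_subset sIJ) index_filter_le. Qed.

Lemma precedes_disjoint J1 J2 : precedes J1 J2 -> [disjoint J1 & J2].
Proof.
by move=> J12; apply/pred0P => x /=; apply/negP => /andP[/J12 lt_xx /lt_xx]; rewrite ltxx.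
Qed.

Lemma precedesSS I1 I2 J1 J2 : I1 \subset J1 -> I2 \subset J2 ->
  precedes J1 J2 -> precedes I1 I2.
Proof. by move=> sI1 sI2 J12 x y /(subsetP sI1) J1x /(subsetP sI2); apply: J12. Qed.

Lemma ordseqU J1 J2 : precedes J1 J2 ->
  ordseq (J1 :|: J2) = ordseq J1 ++ ordseq J2.
Proof.
move=> J12; apply: lt_sorted_eq; rewrite ?ordseq_sorted //.
  rewrite lt_sorted_pairwise pairwise_cat -!lt_sorted_pairwise !ordseq_sorted.
  by rewrite !andbT; apply/allrelP => x y; rewrite !mem_ordseq; apply: J12.
by move=> x; rewrite mem_cat !mem_ordseq inE.
Qed.

Lemma tJU (R : comNzRingType) J1 J2 : precedes J1 J2 ->
  tJ (J1 :|: J2) = tJ J1 * tJ J2 :> freealg R S.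
Proof. by move=> J12; rewrite /tJ ordseqU // big_cat. Qed.

Section SubsetsOfUnion.
Variables J1 J2 I1 I2 : {set S}.
Hypotheses (sI1 : I1 \subset J1) (sI2 : I2 \subset J2).

Lemma setDUU : [disjoint J1 & J2] ->
  (J1 :|: J2) :\: (I1 :|: I2) = (J1 :\: I1) :|: (J2 :\: I2).
Proof.
move=> dJ12; apply/setP => x; rewrite !inE.
have /implyP sI1x : x \in I1 -> x \in J1 by apply: subsetP.
have /implyP sI2x : x \in I2 -> x \in J2 by apply: subsetP.
have /implyP dJ12x : x \in J1 -> x \notin J2 by move/(disjointFr dJ12) ->.
move: sI1x sI2x dJ12x.
by case: (x \in I1); case: (x \in I2); case: (x \in J1); case: (x \in J2).
Qed.

Lemma ellJU : precedes J1 J2 -> ellJ (J1 :|: J2) (I1 :|: I2) =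
  (ellJ J1 I1 + ellJ J2 I2 + #|I2| * (#|J1| - #|I1|))%N.
Proof.
move=> J12; have I12 := precedesSS sI1 sI2 J12.
rewrite /ellJ !ordseqU // big_cat /= -addnA; congr (_ + _)%N.
  apply: eq_big_seq => x; rewrite mem_ordseq => I1x.
  by rewrite !index_cat !mem_ordseq I1x (subsetP sI1).
rewrite -[#|I2|]size_ordseq -sum1_size big_distrl -big_split /=.
apply: eq_big_seq => x; rewrite mem_ordseq => I2x.
have J1x : x \in J1 = false.
  by rewrite (disjointFl (precedes_disjoint J12)) ?(subsetP sI2).
have I1x : x \in I1 = false by apply: contraFF J1x; apply: subsetP.
rewrite !index_cat !mem_ordseq J1x I1x !size_ordseq mul1n.
have := subset_leq_card sI1; have := index_ordseq_subset sI2 I2x.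
move: #|I1| #|J1| (index x _) (index x _) => m1 n1 m2 n2; lia.
Qed.

End SubsetsOfUnion.

Lemma big_powersetU (V : nmodType) (J1 J2 : {set S}) (P : pred {set S})
    (F : {set S} -> V) : [disjoint J1 & J2] ->
  \sum_(I in powerset (J1 :|: J2) | P I) F I =
  \sum_(I1 in powerset J1) \sum_(I2 in powerset J2 | P (I1 :|: I2)) F (I1 :|: I2).
Proof.
move=> dJ12; rewrite pair_big_dep /=.
rewrite (reindex_onto (fun I12 : {set S} * {set S} => I12.1 :|: I12.2)
                      (fun I => (I :&: J1, I :&: J2))) /=.
  apply: eq_bigl => -[I1 I2] /=; rewrite !powersetE.
  apply/andP/and3P => [[/andP[_ PI] /eqP[E1 E2]]|[sI1 sI2 PI]].
    by split=> //; [rewrite -E1 | rewrite -E2]; apply: subsetIr.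
  rewrite setUSS // PI; split=> //; apply/eqP; congr pair.
    rewrite setIUl (setIidPl sI1) (disjoint_setI0 (disjointWl sI2 _)) ?setU0 //.
    by rewrite disjoint_sym.
  by rewrite setIUl (setIidPl sI2) (disjoint_setI0 (disjointWl sI1 dJ12)) set0U.
by move=> I /andP[]; rewrite powersetE => sIJ _; rewrite -setIUr; apply/setIidPl.
Qed.

End OrderedSubsets.

Section TauProduct.
Variables (d : Order.disp_t) (S : finOrderType d) (R : comNzRingType) (q : R).
Implicit Types (I J : {set S}).

Definition tau_coef J I : R := (-1) ^+ ellJ J I * (- q) ^+ #|I|./2.

Definition tau_term J I : freealg R S := tau_coef J I *: tJ (J :\: I).

Definition tau_parity (b : bool) J : freealg R S :=
  \sum_(I in powerset J | odd #|I| == b) tau_term J I.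

Lemma tauPE J : tauP q J = tau_parity false J.
Proof. by apply: eq_big => [I|I _]; rewrite ?eqbF_neg ?divn2. Qed.

Lemma tauME J : tauM q J = tau_parity true J.
Proof.
by apply: eq_big => [I|I /andP[_ oddI]]; rewrite ?eqb_id ?half_pred_odd.
Qed.

(* With [n = #|J1|], [b1 = odd #|I1|] and [b2 = odd #|I2|], the sign
   [(-1) ^+ (b2 * (n + b1))] is [(-1) ^+ (#|I2| * (#|J1| - #|I1|))] from [ellJU],
   and the factor [-q] comes from [halfD] when [#|I1|] and [#|I2|] are both odd. *)
Definition cross_coef (n : nat) (b1 b2 : bool) : R :=
  (-1) ^+ (b2 * (n + b1)) * (- q) ^+ (b1 && b2).

Section Summands.
Variables J1 J2 I1 I2 : {set S}.
Hypotheses (J12 : precedes J1 J2) (sI1 : I1 \subset J1) (sI2 : I2 \subset J2).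

Lemma tau_coefU : tau_coef (J1 :|: J2) (I1 :|: I2) =
  cross_coef #|J1| (odd #|I1|) (odd #|I2|) * (tau_coef J1 I1 * tau_coef J2 I2).
Proof.
have dI12 : [disjoint I1 & I2].
  exact: disjointWl sI1 (disjointWr sI2 (precedes_disjoint J12)).
rewrite /tau_coef (ellJU sI1 sI2 J12) (cardsU_disjoint dI12) halfD !exprD.
rewrite /cross_coef -[(-1) ^+ (#|I2| * _)]signr_odd -[(-1) ^+ (odd _ * _)]signr_odd.
by rewrite !oddM oddB ?subset_leq_card // oddD !oddb; ring.
Qed.

Lemma tau_termU : tau_term (J1 :|: J2) (I1 :|: I2) =
  cross_coef #|J1| (odd #|I1|) (odd #|I2|) *: (tau_term J1 I1 * tau_term J2 I2).
Proof.
have D12 : precedes (J1 :\: I1) (J2 :\: I2).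
  exact: precedesSS (subsetDl _ _) (subsetDl _ _) J12.
rewrite /tau_term tau_coefU (setDUU sI1 sI2 (precedes_disjoint J12)) (tJU R D12).
by rewrite scalerAA_malg scalerA.
Qed.

End Summands.

Lemma tau_parityU b J1 J2 : precedes J1 J2 ->
  tau_parity b (J1 :|: J2) = \sum_(b1 : bool)
    cross_coef #|J1| b1 (b (+) b1) *: (tau_parity b1 J1 * tau_parity (b (+) b1) J2).
Proof.
move=> J12; have dJ12 := precedes_disjoint J12.
rewrite /tau_parity; apply: etrans (big_powersetU _ _ dJ12) _.
rewrite (partition_big (fun I => odd #|I|) predT); last by [].
apply: eq_bigr => b1 _; rewrite mulr_suml scaler_sumr.
apply: eq_bigr => I1 /andP[]; rewrite powersetE => sI1 /eqP oddI1.
rewrite mulr_sumr scaler_sumr.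
have oddU I2 : I2 \subset J2 -> odd #|I1 :|: I2| = b1 (+) odd #|I2|.
  move=> sI2; rewrite cardsU_disjoint ?oddD ?oddI1 //.
  exact: disjointWl sI1 (disjointWr sI2 dJ12).
apply: eq_big => [I2|I2 /andP[]]; rewrite powersetE.
  case: (boolP (I2 \subset J2)) => //= /oddU ->.
  by rewrite addbC -[RHS](inj_eq (@addIb b1)) addbK.
move=> sI2; rewrite (oddU _ sI2) => /eqP def_b; subst b.
by rewrite (tau_termU J12 sI1 sI2) oddI1 addbAC addbb.
Qed.

End TauProduct.

Theorem lemma3p1 (d : Order.disp_t) (S : finOrderType d) (R : comNzRingType)
  (q : R) (J J' J'' : {set S}) :
  J = J' :|: J'' ->
  (forall j' j'', j' \in J' -> j'' \in J'' -> (j' < j'')%O) ->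
  tauP q J = tauP q J' * tauP q J''
             + ((-1) ^+ #|J'| * q) *: (tauM q J' * tauM q J'')
  /\
  tauM q J = tauM q J' * tauP q J''
             + (-1) ^+ #|J'| *: (tauP q J' * tauM q J'').
Proof.
move=> -> J12.
rewrite !tauPE !tauME (tau_parityU q false J12) (tau_parityU q true J12).
split; apply: etrans (big_bool _ _) _.
  rewrite /cross_coef /= mul1n mul0n expr0 mulr1 scale1r !expr1 exprD mulrN1 mulrNN.
  exact: addrC.
by rewrite /cross_coef /= mul1n mul0n !expr0 !mulr1 scale1r addn0.
Qed.
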